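(* Let $n,t$ be positive integers with $t\le n$, and let $a_1,\dots,a_m$ be positive integers, each at most $n/2$, with $a_1+\dots+a_m=t$. Then: (a) some subset of $\{a_1,\dots,a_m\}$ (as a multiset of terms) has sum between $t/3$ and $n/2$ inclusive; (b) if $t\ge n/4$, some subset of $\{a_1,\dots,a_m\}$ has sum between $n/4$ and $n/2$ inclusive. *)

From mathcomp Require Import all_boot.

From mathcomp Require Import all_boot.
From mathcomp Require Import zify.

Set Implicit Arguments.
Unset Strict Implicit.

(* If the whole sum is at most n/2, take every term.  Otherwise cut the
   sequence at an index j where the prefix sum passes n/2: the prefix
   before j, the term a_j and the suffix after j are each at most n/2 (the
   suffix because t <= n), and they add up to t, so one of them reaches t/3.
   For (b), either the prefix reaches n/4, or the prefix is below n/4 and then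
   a_j, which carries the prefix past n/2, exceeds n/4 by itself. *)

Lemma nat_crossing (g : nat -> nat) (N m : nat) :
  g 0 <= N -> N < g m -> exists2 k, k < m & g k <= N < g k.+1.
Proof.
elim: m => [|m IHm] g0 gm; first by rewrite ltnNge g0 in gm.
have [gmN | Ngm] := leqP (g m) N; first by exists m; rewrite ?gmN.
by have [k km gk] := IHm g0 Ngm; exists k; first exact: ltnW.
Qed.

Section OrdinalPrefixSums.

Variables (m : nat) (a : 'I_m -> nat).

Lemma sum_ord_split (j : 'I_m) :
  \sum_i a i = \sum_(i : 'I_m | i < j) a i + a j + \sum_(i : 'I_m | j < i) a i.
Proof.
rewrite (bigD1 j) //= (bigID (fun i : 'I_m => i < j)) /= addnA [_ + a j]addnC.
by congr (_ + _ + _); apply: eq_bigl => i; rewrite -(inj_eq val_inj) /=;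
  case: ltngtP.
Qed.

Lemma exists_prefix_crossing (N : nat) :
  N < \sum_i a i ->
  exists j : 'I_m, \sum_(i : 'I_m | i < j) a i <= N < \sum_(i : 'I_m | i < j) a i + a j.
Proof.
move=> Nlt; pose f k := \sum_(i < m | i < k) a i.
have fm : f m = \sum_i a i by apply: eq_bigl => i; rewrite ltn_ord.
have [k km fk] : exists2 k, k < m & f k <= N < f k.+1.
  by apply: nat_crossing; rewrite ?fm // /f big_pred0.
have step : f k.+1 = f k + a (Ordinal km).
  rewrite /f (bigD1 (Ordinal km)) //= addnC; congr (_ + _).
  by apply: eq_bigl => i; rewrite -(inj_eq val_inj) /= ltnS ltn_neqAle andbC.
by exists (Ordinal km); rewrite -[_ + _]step.
Qed.

End OrdinalPrefixSums.

Theorem mainTheorem13 (n t m : nat) (a : 'I_m -> nat) :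
  0 < n -> 0 < t -> t <= n ->
  (forall i, 0 < a i) ->
  (forall i, 2 * a i <= n) ->
  \sum_(i < m) a i = t ->
  (exists I : {set 'I_m},
      t <= 3 * (\sum_(i in I) a i) /\ 2 * (\sum_(i in I) a i) <= n) /\
  (n <= 4 * t ->
    exists I : {set 'I_m},
      n <= 4 * (\sum_(i in I) a i) /\ 2 * (\sum_(i in I) a i) <= n).
Proof.
move=> _ _ tn _ an sum_t.
have [small | big] := leqP (2 * t) n.
  have sumT : \sum_(i in [set: 'I_m]) a i = t.
    by rewrite -sum_t; apply: eq_bigl => i; rewrite in_setT.
  by split=> [|?]; exists [set: 'I_m]; rewrite sumT; lia.
have [j /andP [pre_le pre_gt]] : exists j : 'I_m,
    \sum_(i : 'I_m | i < j) a i <= n./2 < \sum_(i : 'I_m | i < j) a i + a j.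
  by apply: exists_prefix_crossing; rewrite sum_t; lia.
have split_t := sum_ord_split a j; rewrite sum_t in split_t.
have aj := an j.
have prefix : \sum_(i in [set i : 'I_m | i < j]) a i = \sum_(i : 'I_m | i < j) a i.
  exact: big_set.
have suffix : \sum_(i in [set i : 'I_m | j < i]) a i = \sum_(i : 'I_m | j < i) a i.
  exact: big_set.
have single : \sum_(i in [set j]) a i = a j by rewrite big_set1.
split=> [|_].
- have [pre3 | pre3] := leqP t (3 * \sum_(i : 'I_m | i < j) a i).
    by exists [set i : 'I_m | i < j]; rewrite prefix; lia.
  have [aj3 | aj3] := leqP t (3 * a j); first by exists [set j]; rewrite single; lia.
  by exists [set i : 'I_m | j < i]; rewrite suffix; lia.
- have [pre4 | pre4] := leqP n (4 * \sum_(i : 'I_m | i < j) a i).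
    by exists [set i : 'I_m | i < j]; rewrite prefix; lia.
  by exists [set j]; rewrite single; lia.
Qed.
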